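(* Let $R$ be a number ring. Assume that for every maximal ideal $\mathfrak p$ of $R$ we have $N(\mathfrak p^2)\leq N(\mathfrak p)^2$. Then $R$ is a Dedekind domain.
   Context: A number ring is a subring of a number field (a finite extension of $\mathbb{Q}$). For a non-zero ideal $I$ of $R$, $N(I)=[R:I]$ is its index as an additive subgroup. *)

(* A number field is modelled as K : fieldExtType rat
   (a finite-dimensional field extension of Q); a number ring is a
   subring R of K, given as a Prop-valued predicate on K. *)
From HB Require Import structures.
From mathcomp Require Import all_boot all_order all_algebra all_field.
Set Implicit Arguments. Unset Strict Implicit. Unset Printing Implicit Defensive.
Import GRing.Theory.
Local Open Scope ring_scope.

Section NumberRing.
Variable K : fieldType.

Definition is_subring (R : K -> Prop) : Prop :=
  R 1 /\ (forall x y, R x -> R y -> R (x - y)) /\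
  (forall x y, R x -> R y -> R (x * y)).

Definition is_ideal (R I : K -> Prop) : Prop :=
  (forall x, I x -> R x) /\ I 0 /\
  (forall x y, I x -> I y -> I (x - y)) /\
  (forall r x, R r -> I x -> I (r * x)).

Definition maximal_ideal (R I : K -> Prop) : Prop :=
  is_ideal R I /\ ~ I 1 /\
  forall J, is_ideal R J -> (forall x, I x -> J x) ->
    (forall x, J x <-> I x) \/ J 1.

Definition prime_ideal (R I : K -> Prop) : Prop :=
  is_ideal R I /\ ~ I 1 /\
  forall a b, R a -> R b -> I (a * b) -> I a \/ I b.

Definition ideal_mul (I J : K -> Prop) : K -> Prop :=
  fun x => exists s : seq (K * K),
    (forall ab, ab \in s -> I ab.1 /\ J ab.2) /\
    x = \sum_(ab <- s) ab.1 * ab.2.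

(* ideal_index R I n : the additive index [R : I] is finite and equals n,
   i.e. there are n representatives in R of the cosets of I, each element
   of R being congruent mod I to exactly one of them. *)
Definition ideal_index (R I : K -> Prop) (n : nat) : Prop :=
  exists f : 'I_n -> K, (forall i, R (f i)) /\
    forall x, R x -> exists! i : 'I_n, I (x - f i).

(* Dedekind domain: Noetherian, integrally closed, every nonzero prime
   ideal is maximal. (R is a domain, being a subring of a field.) *)
Definition noetherian_ring (R : K -> Prop) : Prop :=
  forall I, is_ideal R I -> exists s : seq K,
    (forall a, a \in s -> R a) /\
    forall x, I x <-> exists c : 'I_(size s) -> K,
      (forall i, R (c i)) /\ x = \sum_(i < size s) c i * s`_i.

Definition in_frac_field (R : K -> Prop) (x : K) : Prop :=
  exists a b, R a /\ R b /\ b != 0 /\ x = a / b.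

Definition integral_over (R : K -> Prop) (x : K) : Prop :=
  exists p : {poly K}, p \is monic /\ (forall i, R p`_i) /\ root p x.

Definition integrally_closed (R : K -> Prop) : Prop :=
  forall x, in_frac_field R x -> integral_over R x -> R x.

Definition dedekind_domain (R : K -> Prop) : Prop :=
  noetherian_ring R /\ integrally_closed R /\
  forall P, prime_ideal R P -> (exists x, P x /\ x != 0) -> maximal_ideal R P.

End NumberRing.

(* Every nonzero y in R divides a positive integer, since its powers are Z-linearly dependent
   in K, and R / cR is finite for c > 0, since a family independent in the F_p-vector space
   R / pR is Q-linearly independent in K.  Hence R is Noetherian, nonzero ideals have finite
   index, and nonzero primes are maximal.
   For a maximal ideal P, two R/P-independent elements of P / P^2 would give N(P^2) >= N(P)^3
   > N(P)^2, so P = pi R + P^2, and Nakayama yields t outside P with t P <= pi R.  Thus every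
   nonzero element of R is pi^k times a unit of R_P (k being bounded by the finiteness of
   R / cR), which makes R_P integrally closed.  For x in the fraction field integral over R,
   the conductor {r | r x in R} then lies in no maximal ideal, so it contains 1. *)

From HB Require Import structures.
From mathcomp Require Import all_boot all_order all_algebra all_field.
From mathcomp Require Import boolp ring.
Set Implicit Arguments. Unset Strict Implicit. Unset Printing Implicit Defensive.
Import GRing.Theory Num.Theory.
Local Open Scope ring_scope.

Lemma sub_count_lt (T : eqType) (a b : pred T) (s : seq T) x :
  subpred a b -> x \in s -> b x -> ~~ a x -> (count a s < count b s)%N.
Proof.
move=> ab + bx ax; elim: s => //= y s IH.
have aby : (a y <= b y)%N by case: (a y) (ab y) => // ->.
rewrite in_cons => /predU1P [<-|/IH]; last by rewrite -addnS; apply: leq_add.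
by rewrite bx (negbTE ax) add0n add1n ltnS sub_count.
Qed.

(** * Subrings and ideals of a field *)

Section SubringTheory.
Variables (K : fieldType) (R : K -> Prop).
Hypothesis HR : is_subring R.

Lemma subring1 : R 1. Proof. by case: HR. Qed.
Lemma subringB x y : R x -> R y -> R (x - y). Proof. by case: HR => _ [+ _]; apply. Qed.
Lemma subringM x y : R x -> R y -> R (x * y). Proof. by case: HR => _ [_]; apply. Qed.
Lemma subring0 : R 0. Proof. by rewrite -(subrr 1); apply: subringB; apply: subring1. Qed.
Lemma subringN x : R x -> R (- x).
Proof. by move=> Rx; rewrite -sub0r; apply: subringB => //; apply: subring0. Qed.
Lemma subringD x y : R x -> R y -> R (x + y).
Proof. by move=> Rx Ry; rewrite -[y]opprK; apply: subringB => //; apply: subringN. Qed.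
Lemma subring_sum (I : Type) (r : seq I) (P : pred I) (F : I -> K) :
  (forall i, P i -> R (F i)) -> R (\sum_(i <- r | P i) F i).
Proof. by move=> RF; apply: big_ind => //; [apply: subring0 | apply: subringD]. Qed.
Lemma subringX x n : R x -> R (x ^+ n).
Proof.
by move=> Rx; elim: n => [|n IH]; [apply: subring1 | rewrite exprS; apply: subringM].
Qed.
Lemma subring_nat n : R n%:R.
Proof.
by elim: n => [|n IH]; [apply: subring0 | rewrite mulrS; apply: subringD => //; apply: subring1].
Qed.
Lemma subring_int (z : int) : R z%:~R.
Proof. by case: z => n; rewrite ?NegzE ?mulrNz; [|apply: subringN]; apply: subring_nat. Qed.

Section Ideal.
Variable I : K -> Prop.
Hypothesis HI : is_ideal R I.

Lemma idealR x : I x -> R x. Proof. by case: HI => + _; apply. Qed.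
Lemma ideal0 : I 0. Proof. by case: HI => _ []. Qed.
Lemma idealB x y : I x -> I y -> I (x - y). Proof. by case: HI => _ [_ [+ _]]; apply. Qed.
Lemma idealMl r x : R r -> I x -> I (r * x). Proof. by case: HI => _ [_ [_]]; apply. Qed.
Lemma idealMr r x : R r -> I x -> I (x * r). Proof. by rewrite mulrC; apply: idealMl. Qed.
Lemma idealN x : I x -> I (- x).
Proof. by move=> Ix; rewrite -sub0r; apply: idealB => //; apply: ideal0. Qed.
Lemma idealD x y : I x -> I y -> I (x + y).
Proof. by move=> Ix Iy; rewrite -[y]opprK; apply: idealB => //; apply: idealN. Qed.
Lemma ideal_sum (J : Type) (r : seq J) (P : pred J) (F : J -> K) :
  (forall j, P j -> I (F j)) -> I (\sum_(j <- r | P j) F j).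
Proof. by move=> IF; apply: big_ind => //; [apply: ideal0 | apply: idealD]. Qed.

Lemma ideal_indexP n : ideal_index R I n -> exists f : 'I_n -> K,
  [/\ forall i, R (f i), forall i j, I (f i - f j) -> i = j &
      forall x, R x -> exists i, I (x - f i)].
Proof.
move=> [f [Rf uniq_rep]]; exists f; split=> // [i j Iij|x /uniq_rep [i [Ixi _]]]; last by exists i.
have [i0 [_ uniq0]] := uniq_rep (f i) (Rf i).
by move: Iij => /uniq0 <-; symmetry; apply: uniq0; rewrite subrr; apply: ideal0.
Qed.

End Ideal.

Section IdealMul.
Variables I J : K -> Prop.
Hypotheses (HI : is_ideal R I) (HJ : is_ideal R J).

Lemma mem_ideal_mul a b : I a -> J b -> ideal_mul I J (a * b).
Proof. by move=> Ia Jb; exists [:: (a, b)]; rewrite big_seq1; split => // ab /[!inE] /eqP->. Qed.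

Lemma ideal_mul_subl x : ideal_mul I J x -> I x.
Proof.
move=> [s [Hs ->]]; rewrite big_seq; apply: (ideal_sum HI) => ab /Hs [Ia Jb].
exact: idealMr (idealR HJ Jb) Ia.
Qed.

Lemma ideal_mul_ideal : is_ideal R (ideal_mul I J).
Proof.
split; [|split; [|split]].
- by move=> x /ideal_mul_subl /(idealR HI).
- by exists [::]; rewrite big_nil.
- move=> _ _ [s [Hs ->]] [t [Ht ->]].
  exists (s ++ [seq (- ab.1, ab.2) | ab <- t]); split.
    move=> ab; rewrite mem_cat => /orP [/Hs //|/mapP [ab' /Ht [Ia Jb] ->]] /=.
    by split => //; apply: idealN.
  by rewrite big_cat big_map /= (eq_bigr _ (fun i _ => mulNr _ _)) sumrN.
- move=> r _ Rr [s [Hs ->]]; exists [seq (r * ab.1, ab.2) | ab <- s]; split.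
    by move=> ab /mapP [ab' /Hs [Ia Jb] ->] /=; split => //; apply: idealMl.
  by rewrite big_map mulr_sumr; apply: eq_bigr => ab _; rewrite mulrA.
Qed.

End IdealMul.

Lemma sum_int_pow_recl n (c : nat -> int) (y : K) :
  \sum_(i < n.+1) (c i)%:~R * y ^+ i =
  (c 0%N)%:~R + y * \sum_(i < n) (c i.+1)%:~R * y ^+ i.
Proof.
rewrite big_ord_recl expr0 mulr1 mulr_sumr; congr (_ + _).
by apply: eq_bigr => i _; rewrite exprS mulrCA.
Qed.

(* Divide the relation by the power of [y] in front of its lowest nonzero coefficient. *)
Lemma int_poly_root_dvd (y : K) n (c : nat -> int) : R y -> y != 0 ->
  (exists2 i, (i < n)%N & c i != 0) -> \sum_(i < n) (c i)%:~R * y ^+ i = 0 ->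
  exists2 a : int, a != 0 & exists2 z, R z & a%:~R = y * z.
Proof.
move=> Ry y0; elim: n c => [|n IH] c [i0 i0n ci0] //; rewrite sum_int_pow_recl.
have [c0|c0] := eqVneq (c 0%N) 0.
  rewrite c0 add0r => /eqP; rewrite mulf_eq0 (negbTE y0) => /eqP /(IH (fun i => c i.+1)); apply.
  by case: i0 i0n ci0 => [|i] i0n ci0; [rewrite c0 eqxx in ci0 | exists i].
move=> /eqP; rewrite addr_eq0 => /eqP E; exists (c 0%N) => //.
exists (- \sum_(i < n) (c i.+1)%:~R * y ^+ i); last by rewrite mulrN.
by apply/subringN/subring_sum => i _; apply: subringM; [apply: subring_int | apply: subringX].
Qed.

Section PrimeIdeal.
Variable P : K -> Prop.
Hypothesis HP : prime_ideal R P.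

Lemma prime_ideal_ideal : is_ideal R P. Proof. by case: HP. Qed.
Lemma prime_ideal_neq1 : ~ P 1. Proof. by case: HP => _ []. Qed.

Lemma prime_idealM a b : R a -> R b -> ~ P a -> ~ P b -> ~ P (a * b).
Proof. by move=> Ra Rb Pa Pb; case: HP => _ [_ /(_ a b Ra Rb)] H /H []. Qed.

Lemma prime_idealX w n : R w -> P (w ^+ n) -> P w.
Proof.
move=> Rw; elim: n => [|n IH]; first by rewrite expr0 => /prime_ideal_neq1.
rewrite exprS => Pwn; apply: contrapT => Pw.
by apply: (prime_idealM Rw (subringX n Rw) Pw _ Pwn) => /IH.
Qed.

Lemma integral_mul_prime x D : integral_over R x -> P D -> R (x * D) -> P (x * D).
Proof.
move=> [p [mp [Rp rp]]] PD RxD; have PI := prime_ideal_ideal.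
have sp : size p = (size p).-1.+1 by rewrite prednK // size_poly_gt0 monic_neq0.
move: (monicP mp); rewrite lead_coefE; set n := (size p).-1 in sp * => pn.
apply: (prime_idealX (n := n)) => //.
have : D ^+ n * p.[x] = 0 by rewrite (rootP rp) mulr0.
rewrite horner_coef sp big_ord_recr /= pn mul1r mulrDr -exprMn [D * x]mulrC.
move=> /eqP; rewrite addrC addr_eq0 => /eqP ->; apply: (idealN PI).
rewrite mulr_sumr; apply: (ideal_sum PI) => i _.
have -> : D ^+ n * (p`_i * x ^+ i) = p`_i * (x * D) ^+ i * D ^+ (n - i).
  have -> : D ^+ n = D ^+ i * D ^+ (n - i) by rewrite -exprD subnKC // ltnW.
  by rewrite exprMn; ring.
apply: (idealMl PI); first by apply: subringM => //; apply: subringX.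
have ni : (0 < n - i)%N by rewrite subn_gt0.
by rewrite -(prednK ni) exprS; apply: (idealMr PI) => //; apply/subringX/(idealR PI PD).
Qed.

Lemma prime_ideal_prime_nat c : (0 < c)%N -> P c%:R -> exists2 p, prime p & P p%:R.
Proof.
elim/ltn_ind: c => c IH c0 Pc; have [|c1|c1] := ltngtP c 1.
- by rewrite ltnS leqn0 => /eqP c00; rewrite c00 in c0.
- have pc := pdiv_prime c1; have [q qc] : exists q, c = (pdiv c * q)%N.
    by exists (c %/ pdiv c)%N; rewrite mulnC divnK // pdiv_dvd.
  move: Pc; rewrite qc natrM => Pc; apply: contrapT => Np.
  have Pq : P q%:R.
    case: HP => _ [_ /(_ _ _ (subring_nat _) (subring_nat _) Pc)] [Ppc|] //.
    by case: Np; exists (pdiv c).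
  have q0 : (0 < q)%N by move: c0; rewrite qc muln_gt0 => /andP [].
  by apply: Np; apply: (IH q) => //; rewrite qc -{1}(mul1n q) ltn_mul2r q0 prime_gt1.
- by move: Pc; rewrite c1 => /prime_ideal_neq1.
Qed.

(* The lowest coefficient not divisible by [p] is invertible modulo [P]. *)
Lemma prime_int_poly_root_inv p (y : K) n (c : nat -> int) : prime p -> P p%:R -> R y -> ~ P y ->
  (exists2 i, (i < n)%N & ~~ (p%:Z %| c i)%Z) -> P (\sum_(i < n) (c i)%:~R * y ^+ i) ->
  exists2 z, R z & P (1 - y * z).
Proof.
move=> pp Pp Ry Py; have PI := prime_ideal_ideal.
elim: n c => [|n IH] c [i0 i0n ci0] //; rewrite sum_int_pow_recl.
set S := \sum_(i < n) _ => PS.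
have RS : R S by apply: subring_sum => i _; apply: subringM; [apply: subring_int | apply: subringX].
have [pc0|pc0] := boolP (p%:Z %| c 0%N)%Z.
  have Pc0 : P (c 0%N)%:~R.
    by rewrite -(divzK pc0) intrM; apply: (idealMl PI) => //; apply: subring_int.
  have PyS : P (y * S).
    by rewrite -(addKr (c 0%N)%:~R (y * S)); apply: (idealD PI) => //; apply: (idealN PI).
  apply: (IH (fun i => c i.+1)).
    by case: i0 i0n ci0 => [|i] i0n ci0; [rewrite pc0 in ci0 | exists i].
  by apply: contrapT => NS; apply: prime_idealM PyS.
have : coprimez (c 0%N) p%:Z by rewrite coprimezE coprime_sym prime_coprime.
case/coprimezP => [[u v] /= Huv]; exists (- (u%:~R * S)).
  by apply: subringN; apply: subringM => //; apply: subring_int.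
have -> : 1 - y * - (u%:~R * S) = u%:~R * ((c 0%N)%:~R + y * S) + v%:~R * p%:R.
  have H1 : u%:~R * (c 0%N)%:~R + v%:~R * p%:R = 1 :> K.
    by rewrite -[p%:R]/((p%:Z)%:~R) -!intrM -intrD Huv.
  by rewrite -[X in X - _ = _]H1; ring.
by apply: (idealD PI); apply: (idealMl PI) => //; apply: subring_int.
Qed.

End PrimeIdeal.

Section MaximalIdeal.
Variable P : K -> Prop.
Hypothesis HP : maximal_ideal R P.

Lemma maximal_ideal_ideal : is_ideal R P. Proof. by case: HP. Qed.

Lemma maximal_ideal_inv r : R r -> ~ P r -> exists2 u, R u & P (1 - u * r).
Proof.
move=> Rr Pr; have PI := maximal_ideal_ideal.
pose J x := exists q u, [/\ P q, R u & x = q + u * r].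
have HJ : is_ideal R J.
  split; [|split; [|split]].
  - by move=> _ [q [u [Pq Ru ->]]]; apply: subringD; [apply: (idealR PI Pq) | apply: subringM].
  - by exists 0, 0; rewrite mul0r addr0; split => //; [apply: ideal0 | apply: subring0].
  - move=> _ _ [q [u [Pq Ru ->]]] [q' [u' [Pq' Ru' ->]]].
    by exists (q - q'), (u - u'); split; [apply: idealB | apply: subringB | ring].
  - move=> s _ Rs [q [u [Pq Ru ->]]].
    by exists (s * q), (s * u); split; [apply: idealMl | apply: subringM | ring].
have PJ x : P x -> J x by exists x, 0; rewrite mul0r addr0; split => //; apply: subring0.
case: HP => _ [_ /(_ J HJ PJ)] [/(_ r) JP | [q [u [Pq Ru E]]]].
  case: Pr; apply/JP; exists 0, 1; rewrite add0r mul1r.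
  by split=> //; [apply: ideal0 | apply: subring1].
by exists u => //; rewrite E addrK.
Qed.

Lemma maximal_prime : prime_ideal R P.
Proof.
have PI := maximal_ideal_ideal.
split=> //; split; first by case: HP => _ [].
move=> a b Ra Rb Pab; case: (pselect (P a)) => Pa; [by left | right].
have [u Ru Pu] := maximal_ideal_inv Ra Pa.
have -> : b = u * (a * b) + (1 - u * a) * b by ring.
by apply: (idealD PI); [apply: (idealMl PI) | apply: (idealMr PI)].
Qed.

Lemma maximal_sq_cancel a y z : R a -> ~ P a -> P y ->
  ideal_mul P P (a * y + z) -> exists2 u, R u & ideal_mul P P (y + u * z).
Proof.
move=> Ra Pa Py Ps; have [u Ru Pu] := maximal_ideal_inv Ra Pa.
have PI := maximal_ideal_ideal; have P2 := ideal_mul_ideal PI PI.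
exists u => //; have -> : y + u * z = u * (a * y + z) + (1 - u * a) * y by ring.
by apply: (idealD P2); [apply: idealMl | apply: mem_ideal_mul].
Qed.

Lemma sq_residue_inj n (f : 'I_n -> K) p1 p2 i j k i' j' k' :
  (forall i, R (f i)) -> (forall i i', P (f i - f i') -> i = i') ->
  P p1 -> ~ ideal_mul P P p1 -> P p2 -> (forall w, R w -> ~ ideal_mul P P (p2 - p1 * w)) ->
  ideal_mul P P ((f i + f j * p1 + f k * p2) - (f i' + f j' * p1 + f k' * p2)) ->
  [/\ i = i', j = j' & k = k'].
Proof.
move=> Rf f_inj Pp1 P2p1 Pp2 P2p2; have PI := maximal_ideal_ideal.
pose a := f k - f k'; pose b := f j - f j'.
have [Ra Rb] : R a /\ R b by split; apply: subringB.
have -> : f i + f j * p1 + f k * p2 - (f i' + f j' * p1 + f k' * p2) =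
    (f i - f i') + (b * p1 + a * p2) by rewrite /a /b; ring.
move=> E; have ii' : i = i'.
  apply: f_inj; rewrite -(addrK (b * p1 + a * p2) (f i - f i')).
  apply: (idealB PI); first exact: ideal_mul_subl E.
  by apply: (idealD PI); apply: (idealMl PI).
subst i'; move: E; rewrite subrr add0r => E.
have kk' : k = k'.
  apply: f_inj; apply: contrapT => Pa; move: E; rewrite addrC.
  case/(maximal_sq_cancel Ra Pa Pp2) => u Ru.
  have -> : p2 + u * (b * p1) = p2 - p1 * - (u * b) by ring.
  exact: P2p2 (subringN (subringM Ru Rb)).
subst k'; move: E; rewrite /a subrr mul0r addr0 -[b * p1]addr0 => E.
split=> //; apply: f_inj; apply: contrapT => Pb; apply: P2p1.
by have [u _] := maximal_sq_cancel Rb Pb Pp1 E; rewrite mulr0 addr0.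
Qed.

(* The residues [f i + f j * p1 + f k * p2] mod [P^2] are pairwise distinct. *)
Lemma ideal_index_cube_le n m p1 p2 :
  ideal_index R P n -> ideal_index R (ideal_mul P P) m ->
  P p1 -> ~ ideal_mul P P p1 -> P p2 -> (forall w, R w -> ~ ideal_mul P P (p2 - p1 * w)) ->
  (n ^ 3 <= m)%N.
Proof.
have PI := maximal_ideal_ideal; have P2 := ideal_mul_ideal PI PI.
move=> /(ideal_indexP PI) [f [Rf f_inj _]] /(ideal_indexP P2) [f2 [_ _ f2_onto]].
move=> Pp1 P2p1 Pp2 P2p2; have [Rp1 Rp2] := (idealR PI Pp1, idealR PI Pp2).
pose e (t : 'I_n * 'I_n * 'I_n) := f t.1.1 + f t.1.2 * p1 + f t.2 * p2.
have /choice [h Hh] : forall t, exists i, ideal_mul P P (e t - f2 i).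
  by move=> t; apply: f2_onto; apply: subringD; [apply: subringD |]; try apply: subringM.
suff /leq_card : injective h by rewrite !card_prod !card_ord !expnS expn0 muln1 mulnA.
move=> [[i j] k] [[i' j'] k'] hE.
suff [-> -> ->] : [/\ i = i', j = j' & k = k'] by [].
apply: (sq_residue_inj Rf f_inj Pp1 P2p1 Pp2 P2p2).
have -> : f i + f j * p1 + f k * p2 - (f i' + f j' * p1 + f k' * p2) =
    (e (i, j, k) - f2 (h (i, j, k))) - (e (i', j', k') - f2 (h (i', j', k'))).
  by rewrite hE /e /=; ring.
apply: (idealB P2); apply: Hh.
Qed.

End MaximalIdeal.

Lemma conductor_ideal x : is_ideal R (fun r => R r /\ R (r * x)).
Proof.
split; [by move=> r [] | split; [|split]].
- by split; rewrite ?mul0r; apply: subring0.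
- move=> r s [Rr Rrx] [Rs Rsx]; split; first exact: subringB.
  by rewrite mulrBl; apply: subringB.
- move=> r s Rr [Rs Rsx]; split; first exact: subringM.
  by rewrite -mulrA; apply: subringM.
Qed.

Definition principal (c : K) : K -> Prop := fun x => exists2 z, R z & x = c * z.

Definition residue_cover (I : K -> Prop) (L : seq K) : Prop :=
  (forall l, l \in L -> R l) /\ forall x, R x -> exists2 l, l \in L & I (x - l).

(* [N(P^2) <= N(P)^2], the norms being the indices in [R]. *)
Definition norm_sq_le (P : K -> Prop) : Prop := forall n m : nat,
  ideal_index R P n -> ideal_index R (ideal_mul P P) m -> (m <= n ^ 2)%N.

Definition ideal_span (s : seq K) (x : K) : Prop :=
  exists c : 'I_(size s) -> K, (forall i, R (c i)) /\ x = \sum_(i < size s) c i * s`_i.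

Lemma principal_sub I c : is_ideal R I -> I c -> forall x, principal c x -> I x.
Proof. by move=> HI Ic _ [z Rz ->]; apply: (idealMr HI). Qed.

Lemma residue_cover_sub J J' L : (forall x, J x -> J' x) ->
  residue_cover J L -> residue_cover J' L.
Proof. by move=> JJ' [RL cover]; split=> // x /cover [l Ll /JJ']; exists l. Qed.

Lemma residue_cover_mul a b L1 L2 : R a ->
  residue_cover (principal a) L1 -> residue_cover (principal b) L2 ->
  residue_cover (principal (a * b)) [seq l1 + a * l2 | l1 <- L1, l2 <- L2].
Proof.
move=> Ra [RL1 cover1] [RL2 cover2]; split.
  move=> _ /allpairsP [[l1 l2] [/= /RL1 Rl1 /RL2 Rl2 ->]].
  by apply: subringD => //; apply: subringM.
move=> x Rx; have [l1 L1l1 [z1 Rz1 E1]] := cover1 x Rx.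
have [l2 L2l2 [z2 Rz2 E2]] := cover2 z1 Rz1.
exists (l1 + a * l2); first exact: allpairs_f.
by exists z2 => //; rewrite -mulrA -E2 mulrBr -E1; ring.
Qed.

Lemma residue_cover_count_lt J I I' L x : is_ideal R I -> is_ideal R I' ->
  (forall y, J y -> I y) -> (forall y, I y -> I' y) -> residue_cover J L ->
  I' x -> ~ I x -> (count (fun l => `[< I l >]) L < count (fun l => `[< I' l >]) L)%N.
Proof.
move=> HI HI' JI II' [_ cover] I'x Ix.
have [l Ll Jxl] := cover x (idealR HI' I'x).
apply: (sub_count_lt (x := l)) => //.
- by move=> y /asboolP /II' /asboolP.
- by apply/asboolP; rewrite -(subKr x l); apply: (idealB HI') => //; apply/II'/JI.
- apply/asboolP => Il; apply: Ix; rewrite -(subrK l x).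
  by apply: (idealD HI) => //; apply: JI.
Qed.

Lemma maximal_ideal_sup J L : is_ideal R J -> ~ J 1 -> residue_cover J L ->
  exists2 P, maximal_ideal R P & forall x, J x -> P x.
Proof.
move=> HJ J1 cover.
pose above k := `[< exists I, [/\ is_ideal R I, ~ I 1, forall x, J x -> I x &
  count (fun l => `[< I l >]) L = k] >].
have above_ex : exists k, above k by eexists; apply/asboolP; exists J.
have above_le k : above k -> (k <= size L)%N by move=> /asboolP [I [_ _ _ <-]]; apply: count_size.
have [_ /asboolP [I [HI I1 JI <-]] maxI] := ex_maxnP above_ex above_le.
exists I => //; split=> //; split=> // J' HJ' IJ'.
case: (pselect (J' 1)) => J'1; [by right | left] => x; split=> [J'x|/IJ' //].
apply: contrapT => Ix; suff /maxI : above (count (fun l => `[< J' l >]) L).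
  by rewrite leqNgt (residue_cover_count_lt HI HJ' JI IJ' cover J'x Ix).
by apply/asboolP; exists J'; split=> // y /JI /IJ'.
Qed.

Lemma residue_cover_transversal I L : is_ideal R I -> residue_cover I L ->
  exists g : seq K, [/\ forall l, l \in g -> R l,
    forall i j, (i < size g)%N -> (j < size g)%N -> I (g`_i - g`_j) -> i = j &
    forall x, R x -> exists2 i, (i < size g)%N & I (x - g`_i)].
Proof.
move=> HI [RL cover].
suff [g [Rg inj Lg]] : exists g : seq K, [/\ forall l, l \in g -> R l,
    forall i j, (i < size g)%N -> (j < size g)%N -> I (g`_i - g`_j) -> i = j &
    forall l, l \in L -> exists2 i, (i < size g)%N & I (l - g`_i)].
  exists g; split=> // x /cover [l /Lg [i ig Ili] Ixl]; exists i => //.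
  by rewrite -(subrK l x) -addrA; apply: (idealD HI).
elim: L RL {cover} => [|l L IH] RL; first by exists [::].
have [|g [Rg inj Lg]] := IH; first by move=> y Ly; apply: RL; rewrite inE Ly orbT.
case: (pselect (exists2 i, (i < size g)%N & I (l - g`_i))) => [lg|lg].
  by exists g; split=> // y /[!inE] /predU1P [->|/Lg].
have Rl : R l by apply: RL; rewrite inE eqxx.
exists (l :: g); split.
- by move=> y /[!inE] /predU1P [->|/Rg].
- case=> [|i] [|j] //= ig jg Igg; first by case: lg; exists j.
    by case: lg; exists i; rewrite // -opprB; apply: (idealN HI).
  by rewrite (inj i j).
- move=> y /[!inE] /predU1P [->|/Lg [i ig Iyi]]; last by exists i.+1.
  by exists 0%N; rewrite //= subrr; apply: ideal0.
Qed.

Lemma residue_cover_index I L : is_ideal R I -> residue_cover I L ->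
  exists n, ideal_index R I n.
Proof.
move=> HI /(residue_cover_transversal HI) [g [Rg inj cover]].
exists (size g), (fun i => g`_i); split=> [i|x Rx]; first by apply/Rg/mem_nth.
have [i ig Ixi] := cover x Rx; exists (Ordinal ig); split=> // j Ixj.
apply: val_inj; apply: inj => //=; rewrite -(subrKA x) addrC -opprB.
by apply: (idealB HI).
Qed.

Lemma ideal_index_gt1 I n : is_ideal R I -> ~ I 1 -> ideal_index R I n -> (1 < n)%N.
Proof.
move=> HI I1 [f [Rf uniq_rep]]; rewrite ltnNge; apply/negP => n1.
have [i [I0i _]] := uniq_rep 0 subring0; have [j [I1j _]] := uniq_rep 1 subring1.
have ij : i = j.
  apply: ord_inj; move: (leq_trans (ltn_ord i) n1) (leq_trans (ltn_ord j) n1).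
  by rewrite !ltnS !leqn0 => /eqP -> /eqP ->.
apply: I1; have -> : 1 = (1 - f j) - (0 - f j) by ring.
by rewrite -ij in I1j *; apply: (idealB HI).
Qed.

Lemma ideal_span_mem s r a : R r -> a \in s -> ideal_span s (r * a).
Proof.
move=> Rr; rewrite -index_mem => ai; pose i0 := Ordinal ai.
exists (fun i => if i == i0 then r else 0); split=> [i|].
  by case: eqP => _ //; apply: subring0.
rewrite (bigD1 i0) //= eqxx big1 ?addr0 ?nth_index -?index_mem // => i /negbTE ->.
exact: mul0r.
Qed.

Lemma ideal_span_add s x y : ideal_span s x -> ideal_span s y -> ideal_span s (x + y).
Proof.
move=> [c [Rc ->]] [d [Rd ->]]; exists (fun i => c i + d i); split=> [i|]; first exact: subringD.
by rewrite -big_split; apply: eq_bigr => i _; rewrite mulrDl.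
Qed.

Lemma ideal_span_sub I s x : is_ideal R I -> (forall a, a \in s -> I a) ->
  ideal_span s x -> I x.
Proof.
move=> HI Is [c [Rc ->]]; apply: (ideal_sum HI) => i _.
by apply: (idealMl HI) => //; apply/Is/mem_nth.
Qed.

Lemma ideal_span_nat s x : ideal_span s x ->
  exists2 h : nat -> K, (forall j, R (h j)) & x = \sum_(j < size s) h j * s`_j.
Proof.
move=> [c [Rc ->]]; exists (fun j => if insub j is Some i then c i else 0).
  by move=> j; case: insub => [i|]; [apply: Rc | apply: subring0].
by apply: eq_bigr => i _; rewrite valK.
Qed.

(* Generators: [c] and one element of [I] in each residue class mod [c] meeting [I]. *)
Lemma ideal_span_cover I c L : is_ideal R I -> I c -> residue_cover (principal c) L ->
  exists s, (forall a, a \in s -> I a) /\ forall x, I x <-> ideal_span s x.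
Proof.
move=> HI Ic [_ cover].
have /choice [ch Hch] : forall l, exists w, I w /\
    ((exists2 x, I x & principal c (x - l)) -> principal c (w - l)).
  move=> l; case: (pselect (exists2 x, I x & principal c (x - l))).
    by move=> [x Ix xl]; exists x.
  by move=> nx; exists 0; split; [apply: ideal0 | move/nx].
have Is a : a \in c :: map ch L -> I a.
  by rewrite inE => /predU1P [->|/mapP [l _ ->]] //; apply: (Hch l).1.
exists (c :: map ch L); split=> // x; split=> [Ix|]; last exact: ideal_span_sub.
have [l Ll xl] := cover x (idealR HI Ix).
have [z Rz Ez] := (Hch l).2 (ex_intro2 _ _ x Ix xl); have [y Ry Ey] := xl.
have -> : x = (y - z) * c + 1 * ch l.
  by rewrite -(subrK l x) -(subrK l (ch l)) Ey Ez; ring.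
apply: ideal_span_add; apply: ideal_span_mem.
- exact: subringB.
- exact: mem_head.
- exact: subring1.
- by rewrite inE map_f ?orbT.
Qed.

(** * Localization at a prime ideal *)

(* [loc_dvd P pi k y] says that [y] lies in [pi ^+ k] times the localization of [R] at [P]. *)
Definition loc_dvd (P : K -> Prop) (pi : K) (k : nat) (y : K) : Prop :=
  exists s w, [/\ R s, ~ P s, R w & s * y = pi ^+ k * w].

Section Nakayama.
Variables (P : K -> Prop) (g : seq K) (pi : K).
Hypothesis HP : prime_ideal R P.
Hypothesis P_span : forall x, P x <-> ideal_span g x.
Hypothesis pi_gen : forall y, P y -> exists2 w, R w & ideal_mul P P (y - pi * w).

Let PI := prime_ideal_ideal HP.

Lemma span_nth_mem j : P g`_j.
Proof.
case: (ltnP j (size g)) => jg; last by rewrite nth_default //; apply: ideal0.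
by apply/P_span; rewrite -[g`_j]mul1r; apply/ideal_span_mem/mem_nth => //; apply: subring1.
Qed.

Lemma sq_ideal_span z : ideal_mul P P z ->
  exists2 h : nat -> K, (forall j, P (h j)) & z = \sum_(j < size g) h j * g`_j.
Proof.
move=> [s [Hs ->]]; elim: s Hs => [|[a b] s IH] Hs.
  by exists (fun _ => 0) => [_|]; [apply: ideal0 | rewrite big_nil big1 // => j _; rewrite mul0r].
rewrite big_cons /=; have [|h Ph ->] := IH.
  by move=> ab sab; apply: Hs; rewrite inE sab orbT.
have [/= Pa /P_span /ideal_span_nat [c Rc ->]] := Hs (a, b) (mem_head _ _).
exists (fun j => a * c j + h j) => [j|]; first by apply: (idealD PI) => //; apply: (idealMr PI).
rewrite mulr_sumr -big_split /=; apply: eq_bigr => j _; ring.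
Qed.

(* After inverting some [t] outside [P], [P] is generated by [pi] and the [g`_j], [j < k], with
   coefficients in [P]; descending on [k] eliminates the [g`_j] one at a time. *)
Definition reduced_span k := exists t, [/\ R t, ~ P t & forall y, P y ->
  exists w (h : nat -> K), [/\ R w, forall j, P (h j) & t * y = pi * w + \sum_(j < k) h j * g`_j]].

Lemma reduced_span_size : reduced_span (size g).
Proof.
exists 1; split; [exact: subring1 | exact: prime_ideal_neq1 |] => y Py.
have [w Rw /sq_ideal_span [h Ph Eh]] := pi_gen Py.
by exists w, h; split=> //; rewrite -Eh mul1r; ring.
Qed.

Lemma reduced_span_pred k : reduced_span k.+1 -> reduced_span k.
Proof.
move=> [t [Rt Pt Ht]].
have [w0 [h0 [Rw0 Ph0]]] := Ht _ (span_nth_mem k).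
rewrite big_ord_recr /=; set S0 := \sum_(j < k) _ => E0.
have Rh0 j : R (h0 j) := idealR PI (Ph0 j).
have Rth : R (t - h0 k) by apply: subringB.
have Pth : ~ P (t - h0 k).
  by move=> Pth; apply: Pt; rewrite -(subrK (h0 k) t); apply: (idealD PI).
have Eg : (t - h0 k) * g`_k = pi * w0 + S0 by rewrite mulrBl E0 addrA addrK.
exists (t * (t - h0 k)); split; [exact: subringM | exact: prime_idealM |] => y Py.
have [w [h [Rw Ph]]] := Ht y Py; rewrite big_ord_recr /=; set S := \sum_(j < k) _ => E.
exists ((t - h0 k) * w + h k * w0), (fun j => (t - h0 k) * h j + h k * h0 j); split.
- by apply: subringD; apply: subringM => //; apply: (idealR PI).
- by move=> j; apply: (idealD PI); [apply: (idealMl PI) | apply: (idealMr PI)].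
- have -> : \sum_(j < k) ((t - h0 k) * h j + h k * h0 j) * g`_j = (t - h0 k) * S + h k * S0.
    by rewrite /S /S0 !mulr_sumr -big_split; apply: eq_bigr => j _ /=; ring.
  rewrite mulrAC E.
  transitivity ((pi * w + S) * (t - h0 k) + h k * ((t - h0 k) * g`_k)); first by ring.
  by rewrite Eg; ring.
Qed.

Lemma prime_loc_principal y : P y -> loc_dvd P pi 1 y.
Proof.
have [t [Rt Pt Ht]] : reduced_span 0.
  by elim: (size g) reduced_span_size => // k IH /reduced_span_pred.
move=> /Ht [w [h [Rw _ E]]]; exists t, w; split=> //.
by rewrite E big_ord0 addr0 expr1.
Qed.

End Nakayama.

Section LocalValuation.
Variables (P : K -> Prop) (pi : K).
Hypotheses (HP : prime_ideal R P) (Ppi : P pi) (pi_neq0 : pi != 0).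

Let PI := prime_ideal_ideal HP.
Let Rpi : R pi := idealR PI Ppi.

Lemma loc_dvd_ideal k : is_ideal R (fun r => R r /\ loc_dvd P pi k r).
Proof.
split; [by move=> x [] | split; [|split]].
- split; first exact: subring0.
  exists 1, 0; rewrite !mulr0.
  by split; [apply: subring1 | apply: prime_ideal_neq1 | apply: subring0|].
- move=> x y [Rx [s1 [w1 [Rs1 Ps1 Rw1 E1]]]] [Ry [s2 [w2 [Rs2 Ps2 Rw2 E2]]]].
  split; first exact: subringB.
  exists (s1 * s2), (s2 * w1 - s1 * w2); split; [exact: subringM | exact: prime_idealM | |].
    by apply: subringB; apply: subringM.
  have -> : s1 * s2 * (x - y) = s2 * (s1 * x) - s1 * (s2 * y) by ring.
  by rewrite E1 E2; ring.
- move=> r x Rr [Rx [s [w [Rs Ps Rw E]]]]; split; first exact: subringM.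
  by exists s, (r * w); split=> //; [apply: subringM | rewrite mulrCA E; ring].
Qed.

Lemma loc_dvd_le j k y : (j <= k)%N -> loc_dvd P pi k y -> loc_dvd P pi j y.
Proof.
move=> jk [s [w [Rs Ps Rw E]]]; exists s, (pi ^+ (k - j) * w); split=> //.
  by apply: subringM => //; apply: subringX.
by rewrite E mulrA -exprD subnKC.
Qed.

Lemma loc_dvd_expr_succ j : ~ loc_dvd P pi j.+1 (pi ^+ j).
Proof.
move=> [s [w [Rs Ps Rw E]]]; apply: Ps.
have : pi ^+ j * (s - pi * w) = 0 by rewrite mulrBr mulrC E exprS; ring.
move/eqP; rewrite mulf_eq0 expf_eq0 (negbTE pi_neq0) andbF subr_eq0 => /eqP ->.
exact: (idealMr PI).
Qed.

(* The ideals [R ∩ pi^j R_P], j <= k, form a strictly decreasing chain above [c R]. *)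
Lemma loc_dvd_bound c L : R c -> residue_cover (principal c) L ->
  forall k, loc_dvd P pi k c -> (k <= size L)%N.
Proof.
move=> Rc cover k ck; pose cnt j := count (fun l => `[< R l /\ loc_dvd P pi j l >]) L.
have chain j : (j <= k)%N -> (cnt j + j <= size L)%N.
  elim: j => [|j IH] jk; first by rewrite addn0 count_size.
  apply: leq_trans (IH (ltnW jk)); rewrite addnS ltn_add2r.
  apply: (residue_cover_count_lt (x := pi ^+ j) (loc_dvd_ideal _) (loc_dvd_ideal _) _ _ cover).
  - by apply: principal_sub (loc_dvd_ideal _) _; split=> //; apply: loc_dvd_le ck.
  - by move=> y [Ry /(loc_dvd_le (leqnSn j))].
  - split; first exact: subringX.
    exists 1, 1; rewrite mul1r mulr1.
    by split=> //; [apply: subring1 | apply: prime_ideal_neq1 | apply: subring1].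
  - by move=> [_ /loc_dvd_expr_succ].
exact: leq_trans (leq_addl _ _) (chain k (leqnn k)).
Qed.

Section LocallyPrincipal.
Hypothesis P_loc : forall y, P y -> loc_dvd P pi 1 y.
Hypothesis loc_bounded : forall y, R y -> y != 0 ->
  exists N, forall k, loc_dvd P pi k y -> (k <= N)%N.

Lemma loc_dvd_unit y : R y -> y != 0 ->
  exists k s u, [/\ R s, ~ P s, R u, ~ P u & s * y = pi ^+ k * u].
Proof.
move=> Ry y0; have [N bound] := loc_bounded Ry y0.
have ex0 : exists k, `[< loc_dvd P pi k y >].
  exists 0%N; apply/asboolP; exists 1, y.
  by rewrite expr0 !mul1r; split=> //; [apply: subring1 | apply: prime_ideal_neq1].
have [k /asboolP [s [w [Rs Ps Rw E]]] maxk] := ex_maxnP ex0 (fun k => bound k \o (asboolP _)).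
exists k, s, w; split=> // Pw; have [t [w' [Rt Pt Rw' E']]] := P_loc Pw.
suff: (k.+1 <= k)%N by rewrite ltnn.
apply: maxk; apply/asboolP; exists (t * s), w'.
split=> //; [exact: subringM | exact: prime_idealM |].
by rewrite -mulrA E mulrCA E' expr1 exprSr mulrA.
Qed.

Lemma loc_integral x : in_frac_field R x -> integral_over R x ->
  exists t, [/\ R t, ~ P t & R (t * x)].
Proof.
move=> [a [b [Ra [Rb [b0 ->]]]]] xint.
have [->|a0] := eqVneq a 0.
  exists 1; rewrite mul0r mulr0.
  by split; [apply: subring1 | apply: prime_ideal_neq1 | apply: subring0].
have [j [s2 [u2 [Rs2 Ps2 Ru2 Pu2 Ea]]]] := loc_dvd_unit Ra a0.
have [k [s1 [u1 [Rs1 Ps1 Ru1 Pu1 Eb]]]] := loc_dvd_unit Rb b0.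
have [kj|jk] := leqP k j.
  exists (u1 * s2); split; [exact: subringM | exact: prime_idealM |].
  have -> : u1 * s2 * (a / b) = s1 * pi ^+ (j - k) * u2.
    apply: (mulIf b0); transitivity (u1 * (s2 * (a / b * b))); first by ring.
    have ej : pi ^+ j = pi ^+ (j - k) * pi ^+ k by rewrite -exprD subnK.
    rewrite divfK // Ea ej.
    by transitivity (pi ^+ (j - k) * u2 * (pi ^+ k * u1)); [ring | rewrite -Eb; ring].
  by apply: subringM => //; apply: subringM => //; apply: subringX.
pose D := s2 * u1 * pi ^+ (k - j).
have xD : a / b * D = u2 * s1.
  apply: (mulIf b0); transitivity (s2 * (a / b * b) * u1 * pi ^+ (k - j)).
    by rewrite /D; ring.
  have ek : pi ^+ k = pi ^+ j * pi ^+ (k - j) by rewrite -exprD subnKC // ltnW.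
  rewrite divfK // Ea.
  by transitivity (u2 * (pi ^+ k * u1)); [rewrite ek; ring | rewrite -Eb; ring].
have PD : P D.
  have kj : (0 < k - j)%N by rewrite subn_gt0.
  rewrite /D -(prednK kj) exprS; apply: (idealMl PI); first exact: subringM.
  by apply: (idealMr PI) => //; apply: subringX.
have Ps1u2 : ~ P (u2 * s1) by apply: prime_idealM.
by exfalso; apply/Ps1u2; rewrite -xD; apply: integral_mul_prime; rewrite // xD; apply: subringM.
Qed.

End LocallyPrincipal.
End LocalValuation.
End SubringTheory.

(** * Number rings *)

Lemma fieldExt_natr_eq0 (K : fieldExtType rat) n : ((n%:R : K) == 0) = (n == 0%N).
Proof. by rewrite -scaler_nat scaler_eq0 oner_eq0 orbF pnatr_eq0. Qed.

Section NumberRing.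
Variables (K : fieldExtType rat) (R : K -> Prop).
Hypothesis HR : is_subring R.

Local Notation d := (\dim {:K}).

Lemma rat_dependent (v : nat -> K) n : (d < n)%N ->
  exists k : nat -> rat, (exists2 i, (i < n)%N & k i != 0) /\ \sum_(i < n) k i *: v i = 0.
Proof.
move=> dn; have : ~~ free (mkseq v n).
  by apply/negP => /eqP fs; move: (dimvS (subvf <<mkseq v n>>)); rewrite fs size_mkseq leqNgt dn.
apply: contraNP => nodep; apply/freeP => k Hk i; apply: contrapT => ki; apply: nodep.
exists (fun j => if insub j is Some j' then k j' else 0); split.
  by exists i; rewrite ?valK //; apply/eqP.
by rewrite -[RHS]Hk; apply: eq_bigr => j _; rewrite valK /= nth_mkseq.
Qed.

(* Clear denominators by multiplying with the product [D] of all of them. *)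
Lemma int_dependent (v : nat -> K) n : (d < n)%N ->
  exists c : nat -> int, (exists2 i, (i < n)%N & c i != 0) /\ \sum_(i < n) (c i)%:~R * v i = 0.
Proof.
move=> /(rat_dependent v) [k [[i0 i0n ki0] Hk]]; pose D := \prod_(i < n) denq (k i).
exists (fun i => numq (k i) * \prod_(j < n | (j : nat) != i) denq (k j)).
have cE i : (i < n)%N ->
    ((numq (k i) * \prod_(j < n | (j : nat) != i) denq (k j))%:~R : rat) = k i * D%:~R.
  by move=> lt; rewrite intrM numqE -mulrA -intrM /D [in RHS](bigD1 (Ordinal lt)).
split.
  exists i0 => //; rewrite -(intr_eq0 rat) cE // mulf_eq0 negb_or ki0 intr_eq0 prodf_seq_neq0.
  by apply/allP => j _; apply: denq_neq0.
transitivity (\sum_(i < n) (D%:~R : rat) *: (k i *: v i)); last by rewrite -scaler_sumr Hk scaler0.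
by apply: eq_bigr => i _; rewrite mulrzl -scaler_int cE // scalerA mulrC.
Qed.

(* Divide by [p] as long as all coefficients are divisible by it; [sum |c i|] decreases. *)
Lemma int_dependent_prime p (v : nat -> K) n : prime p -> (d < n)%N ->
  exists c : nat -> int, (exists2 i, (i < n)%N & ~~ (p%:Z %| c i)%Z) /\
    \sum_(i < n) (c i)%:~R * v i = 0.
Proof.
move=> pp /(int_dependent v) [c [nz rel]].
have [m] := ubnP (\sum_(i < n) `|c i|)%N; elim: m c nz rel => // m IH c [i0 i0n ci0] rel lt_m.
case: (pselect (exists2 i, (i < n)%N & ~~ (p%:Z %| c i)%Z)) => [ndvd|]; first by exists c.
move=> all_dvd; have dvd i : (i < n)%N -> (p%:Z %| c i)%Z.
  by move=> lt; apply: contrapT => /negP ndvd; apply: all_dvd; exists i.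
pose c' i := (c i %/ p%:Z)%Z.
have cE i : (i < n)%N -> c i = c' i * p%:Z by move=> lt; rewrite divzK // dvd.
have c'0 : c' i0 != 0 by apply: contraNneq ci0 => c'0; rewrite cE // c'0 mul0r.
apply: (IH c'); first by exists i0.
- have pK : (p%:R : K) != 0 by rewrite fieldExt_natr_eq0 -lt0n prime_gt0.
  apply/eqP; rewrite -(mulrI_eq0 _ (lregP pK)); apply/eqP.
  rewrite mulr_sumr -[RHS]rel; apply: eq_bigr => i _.
  by rewrite (cE i) // intrM; ring.
- rewrite -ltnS; apply: leq_trans lt_m; rewrite ltnS.
  have -> : (\sum_(i < n) `|c i| = \sum_(i < n) `|c' i| * p)%N.
    by apply: eq_bigr => i _; rewrite cE // abszM.
  have pos : (0 < \sum_(i < n) `|c' i|)%N.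
    by rewrite (bigD1 (Ordinal i0n)) //= ltn_addr // absz_gt0.
  by rewrite -big_distrl /= -{1}[X in (X < _)%N]muln1 ltn_pmul2l ?prime_gt1.
Qed.

(* Linear independence of the images of [g] in the [F_p]-vector space [R / pR]. *)
Definition p_independent (p : nat) (g : seq K) := forall c : nat -> nat,
  (forall i, (i < size g)%N -> (c i < p)%N) ->
  principal R p%:R (\sum_(i < size g) (c i)%:R * g`_i) ->
  forall i, (i < size g)%N -> c i = 0%N.

Lemma p_independent_size p g : prime p -> (forall a, a \in g -> R a) ->
  p_independent p g -> (size g <= d)%N.
Proof.
move=> pp Rg ind; rewrite leqNgt; apply/negP => gd.
have [c [[i0 i0g ci0] rel]] := int_dependent_prime (fun i => g`_i) pp gd.
have p0 : p%:Z != 0 by rewrite eqz_nat -lt0n prime_gt0.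
pose r i := `|(c i %% p%:Z)%Z|%N.
have rE i : (r i)%:Z = (c i %% p%:Z)%Z by rewrite /r gez0_abs // modz_ge0.
suff : r i0 = 0%N.
  by move/(congr1 Posz); rewrite rE => /dvdz_mod0P; rewrite (negbTE ci0).
apply: ind => // [i _|]; first by rewrite -ltz_nat rE ltz_pmod // ltz_nat prime_gt0.
exists (- \sum_(i < size g) ((c i %/ p%:Z)%Z)%:~R * g`_i).
  apply/(subringN HR)/(subring_sum HR) => i _.
  by apply: (subringM HR); [apply: (subring_int HR) | apply/Rg/mem_nth].
transitivity (\sum_(i < size g) (c i)%:~R * g`_i -
    p%:R * \sum_(i < size g) ((c i %/ p%:Z)%Z)%:~R * g`_i); last by rewrite rel sub0r mulrN.
rewrite mulr_sumr -sumrB; apply: eq_bigr => i _.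
have -> : (c i)%:~R = ((c i %/ p%:Z)%Z * p%:Z + (c i %% p%:Z)%Z)%:~R :> K by rewrite -divz_eq.
by rewrite intrD intrM -rE; ring.
Qed.

Lemma p_independent_rcons p g x : prime p -> R x -> p_independent p g ->
  ~ p_independent p (rcons g x) ->
  exists e : nat -> nat, principal R p%:R (x - \sum_(i < size g) (e i)%:R * g`_i).
Proof.
move=> pp Rx ind dep.
have [c [c_lt [z Rz Ez] [i0 i0g ci0]]] : exists c : nat -> nat,
    [/\ forall i, (i <= size g)%N -> (c i < p)%N,
        principal R p%:R (\sum_(i < size g) (c i)%:R * g`_i + (c (size g))%:R * x) &
        exists2 i, (i <= size g)%N & c i != 0%N].
  apply: contrapT => H; apply: dep => c c_lt pc i; rewrite size_rcons => ig.
  apply: contrapT => /eqP ci; apply: H; exists c; split=> //; last by exists i.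
    by move=> j jg; apply: c_lt; rewrite size_rcons.
  move: pc; rewrite size_rcons big_ord_recr /= nth_rcons ltnn eqxx.
  by rewrite (eq_bigr (fun j : 'I__ => (c j)%:R * g`_j)) // => j _; rewrite nth_rcons ltn_ord.
have [ck0|ck0] := posnP (c (size g)).
  have i0g' : (i0 < size g)%N.
    by move: i0g; rewrite leq_eqVlt => /predU1P [ei|//]; rewrite ei ck0 in ci0.
  move: ci0; rewrite (ind c) //; first by move=> i ig; apply/c_lt/ltnW.
  by exists z; rewrite // -Ez ck0 mul0r addr0.
have ckp : (c (size g) < p)%N by apply: c_lt.
have cop : coprime p (c (size g)) by rewrite prime_coprime // gtnNdvd.
have [a _] := @Bezoutl p (c (size g)) (prime_gt0 pp); rewrite (eqP cop) => dvd1.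
exists (fun i => a * c i)%N, (((1 + a * c (size g)) %/ p)%N%:R * x - a%:R * z).
  by apply: (subringB HR); apply: (subringM HR) => //; apply: (subring_nat HR).
have E1 : ((1 + a * c (size g))%N%:R : K) = ((1 + a * c (size g)) %/ p)%N%:R * p%:R.
  by rewrite -natrM divnK.
transitivity ((1 + a * c (size g))%N%:R * x -
    a%:R * (\sum_(i < size g) (c i)%:R * g`_i + (c (size g))%:R * x)).
  have -> : \sum_(i < size g) (a * c i)%N%:R * g`_i = a%:R * \sum_(i < size g) (c i)%:R * g`_i.
    by rewrite mulr_sumr; apply: eq_bigr => i _; rewrite natrM mulrA.
  by rewrite natrD natrM; ring.
by rewrite Ez E1; ring.
Qed.

Lemma p_span_cover p g : (0 < p)%N -> (forall a, a \in g -> R a) ->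
  (forall x, R x -> exists e : nat -> nat,
    principal R p%:R (x - \sum_(i < size g) (e i)%:R * g`_i)) ->
  exists L, residue_cover R (principal R p%:R) L.
Proof.
move=> p0 Rg span.
have Rcomb (e : 'I_(size g) -> nat) : R (\sum_(i < size g) (e i)%:R * g`_i).
  apply: (subring_sum HR) => i _.
  by apply: (subringM HR); [apply: (subring_nat HR) | apply/Rg/mem_nth].
exists [seq \sum_(i < size g) (f i : nat)%:R * g`_i | f : {ffun 'I_(size g) -> 'I_p}].
split=> [_ /mapP [f _ ->] //|x Rx]; have [e [z Rz Ez]] := span x Rx.
pose f := [ffun i : 'I_(size g) => Ordinal (ltn_pmod (e i) p0)].
exists (\sum_(i < size g) (f i : nat)%:R * g`_i); first exact: image_f.
exists (z + \sum_(i < size g) (e i %/ p)%N%:R * g`_i); first by apply: (subringD HR).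
rewrite mulrDr -Ez mulr_sumr -addrA; congr (_ + _); rewrite -!sumrN -big_split.
apply: eq_bigr => i _; rewrite ffunE /=.
have -> : (e i)%:R = (e i %/ p)%N%:R * p%:R + (e i %% p)%N%:R :> K.
  by rewrite -natrM -natrD -divn_eq.
ring.
Qed.

(* A maximal [p]-independent family, of size at most [d], spans [R / pR]. *)
Lemma residue_cover_prime p : prime p -> exists L, residue_cover R (principal R p%:R) L.
Proof.
move=> pp; pose indep k :=
  `[< exists g, [/\ size g = k, forall a, a \in g -> R a & p_independent p g] >].
have indep0 : exists k, indep k by exists 0%N; apply/asboolP; exists [::]; split=> // c _ _ i.
have indep_le k : indep k -> (k <= d)%N.
  by move=> /asboolP [g [<- Rg /(p_independent_size pp Rg)]].
have [k /asboolP [g [gk Rg indg]] maxk] := ex_maxnP indep0 indep_le.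
apply: (p_span_cover (prime_gt0 pp) Rg) => x Rx; apply: (p_independent_rcons pp Rx indg) => indgx.
have /maxk : indep k.+1.
  apply/asboolP; exists (rcons g x); split=> //; first by rewrite size_rcons gk.
  by move=> a; rewrite mem_rcons inE => /predU1P [->|/Rg].
by rewrite ltnn.
Qed.

Lemma residue_cover_nat c : (0 < c)%N -> exists L, residue_cover R (principal R c%:R) L.
Proof.
elim/ltn_ind: c => c IH c0; have [|c1|->] := ltngtP c 1.
- by rewrite ltnS leqn0 => /eqP c00; rewrite c00 in c0.
- have pp := pdiv_prime c1; have [L1 cover1] := residue_cover_prime pp.
  have q0 : (0 < c %/ pdiv c)%N by rewrite divn_gt0 // dvdn_leq // pdiv_dvd.
  have [L2 cover2] := IH _ (ltn_Pdiv (prime_gt1 pp) c0) q0.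
  exists [seq l1 + (pdiv c)%:R * l2 | l1 <- L1, l2 <- L2].
  have -> : (c%:R : K) = (pdiv c)%:R * (c %/ pdiv c)%:R by rewrite -natrM mulnC divnK // pdiv_dvd.
  exact: (residue_cover_mul HR (subring_nat HR _) cover1 cover2).
- exists [:: 0]; split=> [_ /[!inE] /eqP -> | x Rx]; first exact: (subring0 HR).
  by exists 0; rewrite ?mem_head //; exists x; rewrite ?mul1r ?subr0.
Qed.

Lemma dvd_pos_nat y : R y -> y != 0 -> exists2 c : nat, (0 < c)%N & principal R y c%:R.
Proof.
move=> Ry y0; have [c [nz rel]] := int_dependent (fun i => y ^+ i) (ltnSn d).
have [[n|n] a0 [z Rz Ea]] := int_poly_root_dvd HR Ry y0 nz rel.
  by exists n; [rewrite lt0n | exists z].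
exists n.+1 => //; exists (- z); first exact: (subringN HR).
by rewrite mulrN -Ea NegzE mulrNz opprK.
Qed.

Lemma ideal_pos_nat I y : is_ideal R I -> I y -> y != 0 -> exists2 c : nat, (0 < c)%N & I c%:R.
Proof.
move=> HI Iy y0; have [c c0 yc] := dvd_pos_nat (idealR HI Iy) y0.
by exists c => //; apply: principal_sub yc.
Qed.

Lemma ideal_residue_cover I y : is_ideal R I -> I y -> y != 0 -> exists L, residue_cover R I L.
Proof.
move=> HI Iy y0; have [c c0 Ic] := ideal_pos_nat HI Iy y0.
have [L cover] := residue_cover_nat c0.
by exists L; apply: residue_cover_sub cover; apply: principal_sub.
Qed.

(* [P] contains a prime [p], and each [y] outside [P] satisfies a relation not vanishing mod [p]. *)
Lemma nonzero_prime_maximal P : prime_ideal R P -> (exists x, P x /\ x != 0) ->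
  maximal_ideal R P.
Proof.
move=> HP [x [Px x0]]; have PI := prime_ideal_ideal HP.
have [c c0 Pc] := ideal_pos_nat PI Px x0.
have [p pp Pp] := prime_ideal_prime_nat HR HP c0 Pc.
split=> //; split=> [|J HJ PJ]; first exact: prime_ideal_neq1 HP.
case: (pselect (exists2 y, J y & ~ P y)) => [[y Jy Py]|nJ]; last first.
  by left=> w; split=> [Jw|/PJ //]; apply: contrapT => Pw; apply: nJ; exists w.
right; have Ry := idealR HJ Jy.
have [cc [nz rel]] := int_dependent_prime (fun i => y ^+ i) pp (ltnSn d).
have [|w Rw Pw] := prime_int_poly_root_inv HR HP pp Pp Ry Py nz.
  by rewrite rel; apply: (ideal0 PI).
by rewrite -(subrK (y * w) 1); apply: (idealD HJ); [apply: PJ | apply: (idealMr HJ)].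
Qed.

Lemma number_ring_noetherian : noetherian_ring R.
Proof.
move=> I HI; case: (pselect (exists y, I y /\ y != 0)) => [[y [Iy y0]]|I0].
  have [c c0 Ic] := ideal_pos_nat HI Iy y0; have [L cover] := residue_cover_nat c0.
  have [s [Is Ispan]] := ideal_span_cover HR HI Ic cover.
  by exists s; split=> // a /Is /(idealR HI).
exists [::]; split=> // x; split=> [Ix|[c [_ ->]]]; last by rewrite big_ord0; apply: (ideal0 HI).
exists (fun _ => 0); split=> [_|]; first exact: (subring0 HR).
by rewrite big_ord0; apply: contrapT => /eqP x0; apply: I0; exists x.
Qed.

(* Otherwise [P / P^2] contains two independent elements, and [N(P^2) >= N(P)^3]. *)
Lemma maximal_generated_mod_sq P : maximal_ideal R P -> norm_sq_le R P ->
  (exists x, P x /\ x != 0) ->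
  exists2 pi, P pi & forall y, P y -> exists2 w, R w & ideal_mul P P (y - pi * w).
Proof.
move=> HP Pnorm [x [Px x0]]; have PI := maximal_ideal_ideal HP.
have [L cover] := ideal_residue_cover PI Px x0.
have [L2 cover2] :=
  ideal_residue_cover (ideal_mul_ideal PI PI) (mem_ideal_mul Px Px) (mulf_neq0 x0 x0).
have [n Pn] := residue_cover_index PI cover.
have [m P2m] := residue_cover_index (ideal_mul_ideal PI PI) cover2.
have n_gt1 := ideal_index_gt1 HR PI (prime_ideal_neq1 (maximal_prime HR HP)) Pn.
apply: contrapT => nopi.
have outside pi : P pi -> exists2 y, P y & forall w, R w -> ~ ideal_mul P P (y - pi * w).
  move=> Ppi; apply: contrapT => H; apply: nopi; exists pi => // y Py.
  by apply: contrapT => H'; apply: H; exists y => // w Rw P2; apply: H'; exists w.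
have [p1 Pp1 Hp1] := outside 0 (ideal0 PI).
have [p2 Pp2 Hp2] := outside p1 Pp1.
have P2p1 : ~ ideal_mul P P p1 by rewrite -[p1]subr0 -(mulr0 0); apply: Hp1; apply: (subring0 HR).
have := ideal_index_cube_le HR HP Pn P2m Pp1 P2p1 Pp2 Hp2.
by rewrite leqNgt (leq_ltn_trans (Pnorm n m Pn P2m)) // ltn_exp2l.
Qed.

Lemma number_ring_loc_bounded P pi : prime_ideal R P -> P pi -> pi != 0 ->
  forall y, R y -> y != 0 -> exists N, forall k, loc_dvd R P pi k y -> (k <= N)%N.
Proof.
move=> HP Ppi pi0 y Ry y0; have [c c0 [z Rz Ec]] := dvd_pos_nat Ry y0.
have [L cover] := residue_cover_nat c0.
exists (size L) => k yk; apply: (loc_dvd_bound HR HP Ppi pi0 (subring_nat HR c) cover).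
by rewrite Ec; apply: (idealMr (loc_dvd_ideal HR pi HP k) Rz (conj Ry yk)).2.
Qed.

(* The conductor of [x] lies in no maximal ideal, since [x] is locally integral everywhere. *)
Lemma number_ring_integrally_closed :
  (forall P, maximal_ideal R P -> norm_sq_le R P) -> integrally_closed R.
Proof.
move=> Hnorm x xfrac xint; have [a [b [Ra [Rb [b0 Ex]]]]] := xfrac.
pose J r := R r /\ R (r * x); have HJ : is_ideal R J := conductor_ideal HR x.
have Jb : J b by split=> //; rewrite Ex mulrC divfK.
apply: contrapT => Rx; have J1 : ~ J 1 by rewrite /J mul1r => -[].
have [L cover] := ideal_residue_cover HJ Jb b0.
have [P HP JP] := maximal_ideal_sup HJ J1 cover.
have [PI PP] := (maximal_ideal_ideal HP, maximal_prime HR HP).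
have Pb : exists y, P y /\ y != 0 by exists b; split=> //; apply: JP.
have [pi Ppi pi_gen] := maximal_generated_mod_sq HP (Hnorm P HP) Pb.
have [g [_ P_span]] := number_ring_noetherian PI.
have P_loc := prime_loc_principal HR PP P_span pi_gen.
have pi0 : pi != 0.
  have [s [w [_ Ps _ Esb]]] := P_loc b (JP b Jb); apply/negP => /eqP pi0; apply: Ps.
  move: Esb; rewrite pi0 expr1 mul0r => /eqP; rewrite mulf_eq0 (negbTE b0) orbF => /eqP ->.
  exact: ideal0 PI.
have loc_bounded := number_ring_loc_bounded PP Ppi pi0.
have [t [Rt Pt Rtx]] := loc_integral HR PP Ppi P_loc loc_bounded xfrac xint.
by apply: Pt; apply: JP.
Qed.

End NumberRing.

Theorem corollary2p8 (K : fieldExtType rat) (R : K -> Prop)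
  (HR : is_subring R)
  (Hnorm : forall p : K -> Prop, maximal_ideal R p ->
     forall n m : nat, ideal_index R p n -> ideal_index R (ideal_mul p p) m ->
     (m <= n ^ 2)%N) :
  dedekind_domain R.
Proof.
split; first exact: number_ring_noetherian HR.
split; first exact: number_ring_integrally_closed HR Hnorm.
exact: nonzero_prime_maximal HR.
Qed.
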